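(* Let $n\ge 3$ and let $(u,v)$ be an MAB pair of binary words with $|u|=|v|=n$, $i=\mathrm{lsb}(u,v)$, $j=\mathrm{lsb}(v,u)$ and $i+j>n$. Write $u=\alpha\gamma\beta$ and $v=\beta'\gamma'\alpha'$ with $|\alpha|=|\alpha'|=n-i$, $|\gamma|=|\gamma'|=i+j-n$ and $|\beta|=|\beta'|=n-j$. Then: (1) $\big||\alpha|_c-|\alpha'|_c\big|=1$ for all $c\in\{a,b\}$ if and only if $\big||\beta|_c-|\beta'|_c\big|=1$ for all $c\in\{a,b\}$; (2) $\big||\beta|_c-|\beta'|_c\big|=1$ for all $c\in\{a,b\}$ if and only if $i+j-n=1$.
   Context: Let $\Sigma=\{a,b\}$. For a word $w$ and a letter $c$, $|w|_c$ denotes the number of occurrences of $c$ in $w$. Two words $x,y$ are abelian equivalent, written $x\sim_{\mathrm{abl}}y$, if $|x|_c=|y|_c$ for all $c\in\Sigma$. For words $u,v$: a pair $(x,y)$ is an internal abelian-border of $(u,v)$ if $x$ is a nonempty proper suffix of $u$, $y$ is a proper prefix of $v$, and $x\sim_{\mathrm{abl}}y$; it is an external abelian-border of $(u,v)$ if $x$ is a nonempty proper prefix of $u$, $y$ is a proper suffix of $v$, and $x\sim_{\mathrm{abl}}y$. The pair $(u,v)$ is mutually abelian-bordered (MAB) if it has both an internal and an external abelian-border, and mutually abelian-unbordered (MAU) if it has neither. If $(u,v)$ has an internal abelian-border, $\mathrm{sb}(u,v)$ denotes its internal abelian-border $(x,y)$ of minimal length and $\mathrm{lsb}(u,v)=|x|$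 is that minimal length. *)

(* Binary alphabet Sigma = {a,b} is modelled by bool
   (a := true, b := false); words are seq bool. *)
From mathcomp Require Import all_boot all_order all_algebra.
Set Implicit Arguments. Unset Strict Implicit. Unset Printing Implicit Defensive.

Definition word := seq bool.

Definition abel_eq (x y : word) : Prop := forall c : bool, count_mem c x = count_mem c y.

Definition internal_aborder (u v x y : word) : Prop :=
  (0 < size x) /\ (size x < size u) /\ suffix x u /\
  (size y < size v) /\ prefix y v /\ abel_eq x y.

Definition external_aborder (u v x y : word) : Prop :=
  (0 < size x) /\ (size x < size u) /\ prefix x u /\
  (size y < size v) /\ suffix y v /\ abel_eq x y.

Definition has_internal_aborder (u v : word) : Prop :=
  exists x y, internal_aborder u v x y.
Definition has_external_aborder (u v : word) : Prop :=
  exists x y, external_aborder u v x y.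

Definition MAB (u v : word) : Prop :=
  has_internal_aborder u v /\ has_external_aborder u v.

Definition is_lsb (u v : word) (i : nat) : Prop :=
  (exists x y, internal_aborder u v x y /\ size x = i) /\
  (forall x y, internal_aborder u v x y -> i <= size x).

From mathcomp Require Import all_boot all_order all_algebra zify.
Import GRing.Theory Num.Theory.

(* Let h t be the number of a's in the suffix of length t of u minus that in
   the prefix of length t of v, and g the same quantity for (v,u).  Both move
   by unit steps, h vanishes at i but not on (0,i), g vanishes at j but not on
   (0,j), and h t = g (n - t) + D with D = |u|_a - |v|_a.  The border
   equalities γβ ~ β'γ' and αγ ~ γ'α' give |α|_a - |α'|_a = |β|_a - |β'|_a = D,
   which is (1).  For (2): if i + j - n = 1, then h (i-1) = h (n-j) = D is a
   nonzero unit step away from h i = 0.  Conversely if |D| = 1 and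
   i + j - n >= 2, h has the sign of D at n-j but, since g (n-i) = -D, the
   opposite sign at i-1, so h has a zero in (0,i). *)

Lemma count_mem_true_false (s : word) : count_mem true s + count_mem false s = size s.
Proof. by elim: s => //= -[] s IH; lia. Qed.

Lemma abel_eqP (x y : word) :
  abel_eq x y <-> size x = size y /\ count_mem true x = count_mem true y.
Proof.
split=> [xy | [sxy cxy] c].
  by rewrite -!count_mem_true_false !xy.
by have := count_mem_true_false x; have := count_mem_true_false y; case: c; lia.
Qed.

Lemma all_distn_count_mem (x y : word) (k : nat) : size x = size y ->
  (forall c : bool, `|count_mem c x - count_mem c y|%N = k) <->
  `|count_mem true x - count_mem true y|%N = k.
Proof.
move=> sxy; split=> [-> // | dxy c].
by have := count_mem_true_false x; have := count_mem_true_false y; case: c; lia.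
Qed.

Lemma unit_steps_sign (h : nat -> int) (a b : nat) : a <= b ->
  (forall t, a <= t < b -> (`|h t.+1 - h t| <= 1)%R) ->
  (forall t, a <= t <= b -> h t != 0) ->
  (h a < 0)%R = (h b < 0)%R.
Proof.
elim: b => [|b IHb]; first by rewrite leqn0 => /eqP->.
rewrite leq_eqVlt ltnS => /orP[/eqP-> // | le_ab] step nz.
rewrite IHb // => [|t /andP[ta tb]|t /andP[ta tb]]; last 2 first.
- by apply: step; lia.
- by apply: nz; lia.
have nz_b : h b != 0 by apply: nz; lia.
have nz_b1 : h b.+1 != 0 by apply: nz; lia.
have step_b : (`|h b.+1 - h b| <= 1)%R by apply: step; lia.
lia.
Qed.

(* The pair formed by the suffix of length [t] of [u] and the prefix of
   length [t] of [v] is abelian equivalent iff [imbalance u v t = 0]. *)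
Definition imbalance (u v : word) (t : nat) : int :=
  (count_mem true (drop (size u - t) u))%:Z - (count_mem true (take t v))%:Z.

Lemma count_mem_take_drop (s : word) (k : nat) :
  count_mem true (take k s) + count_mem true (drop k s) = count_mem true s.
Proof. by rewrite -count_cat cat_take_drop. Qed.

Lemma imbalance_step (u v : word) (t : nat) : t < size u -> t < size v ->
  (`|imbalance u v t.+1 - imbalance u v t| <= 1)%R.
Proof.
move=> tu tv; rewrite /imbalance.
have -> : size u - t = (size u - t.+1).+1 by lia.
rewrite (drop_nth false) ?(take_nth false) //; last by lia.
rewrite /= -cats1 count_cat /=; lia.
Qed.

Lemma imbalance_swap (u v : word) (t s : nat) : size u = size v -> t + s = size u ->
  imbalance u v t =
  (imbalance v u s + ((count_mem true u)%:Z - (count_mem true v)%:Z))%R.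
Proof.
move=> suv tsu; rewrite /imbalance -suv.
have -> : size u - t = s by lia.
have -> : size u - s = t by lia.
have := count_mem_take_drop u s; have := count_mem_take_drop v t; lia.
Qed.

Lemma is_lsb_imbalance (u v : word) (i : nat) : is_lsb u v i ->
  [/\ 0 < i < size u, imbalance u v i = 0 &
      forall t, 0 < t < i -> imbalance u v t != 0].
Proof.
move=> [[x [y [[x_gt0 [xu [sx [yv [py /abel_eqP[sxy cxy]]]]]] <-]]] lsb_min].
split; first by rewrite x_gt0.
  move: sx py; rewrite suffixE prefixE /imbalance => /eqP-> /eqP.
  by rewrite -sxy => ->; rewrite cxy subrr.
move=> t /andP[t_gt0 t_lt]; apply/eqP => im0.
have sdu : size (drop (size u - t) u) = t by rewrite size_drop; lia.
have stv : size (take t v) = t by rewrite size_take; case: ltnP; lia.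
suff /lsb_min : internal_aborder u v (drop (size u - t) u) (take t v) by lia.
do !split; rewrite ?sdu ?stv ?suffix_drop ?prefix_take //; try lia.
by apply/abel_eqP; rewrite sdu stv; move: im0; rewrite /imbalance; lia.
Qed.

Lemma lsb_overlap_one (u v : word) (i j : nat) : size u = size v ->
  is_lsb u v i -> is_lsb v u j -> size u < i + j ->
  `|count_mem true u - count_mem true v|%N = 1 <-> i + j - size u = 1.
Proof.
move=> suv lsb_i lsb_j ij_gt.
have [/andP[i_gt0 i_lt] h_i h_nz] := is_lsb_imbalance _ _ _ lsb_i.
have [/andP[j_gt0 j_lt] g_j g_nz] := is_lsb_imbalance _ _ _ lsb_j.
have h_nj := imbalance_swap u v (size u - j) j suv ltac:(lia).
rewrite g_j add0r in h_nj.
have h_i1 := imbalance_swap u v i.-1 (size u - i).+1 suv ltac:(lia).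
have h_i1_nz : imbalance u v i.-1 != 0 by apply: h_nz; lia.
split=> [count_gap1 | overlap1]; last first.
  have h_step := imbalance_step u v i.-1 ltac:(lia) ltac:(lia).
  rewrite prednK // (_ : i.-1 = size u - j) ?h_i ?h_nj in h_step h_i1_nz; last by lia.
  lia.
case: (ltngtP (i + j - size u) 1) => // [|ij2]; first by lia.
have := imbalance_swap u v i (size u - i) suv ltac:(lia); rewrite h_i => g_ni.
have g_step := imbalance_step v u (size u - i) ltac:(lia) ltac:(lia).
have g_ni1_nz : imbalance v u (size u - i).+1 != 0 by apply: g_nz; lia.
have sign : (imbalance u v (size u - j) < 0)%R = (imbalance u v i.-1 < 0)%R.
  apply: unit_steps_sign => [|t t_range|t t_range]; first by lia.
    by apply: imbalance_step; lia.
  by apply: h_nz; lia.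
(* [g_ni] and a unit step force [imbalance u v i.-1] to have the sign
   opposite to [imbalance u v (size u - j)]. *)
move: sign; rewrite h_nj h_i1; lia.
Qed.

Theorem mainTheorem5 (n : nat) (u v : word) (i j : nat)
  (alpha gamma beta alpha' gamma' beta' : word) :
  3 <= n -> MAB u v -> size u = n -> size v = n ->
  is_lsb u v i -> is_lsb v u j -> n < i + j ->
  u = alpha ++ gamma ++ beta -> v = beta' ++ gamma' ++ alpha' ->
  size alpha = n - i -> size alpha' = n - i ->
  size gamma = i + j - n -> size gamma' = i + j - n ->
  size beta = n - j -> size beta' = n - j ->
  ((forall c : bool, `|count_mem c alpha - count_mem c alpha'|%N = 1) <->
   (forall c : bool, `|count_mem c beta - count_mem c beta'|%N = 1)) /\
  ((forall c : bool, `|count_mem c beta - count_mem c beta'|%N = 1) <->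
   i + j - n = 1).
Proof.
move=> _ _ su sv lsb_i lsb_j ij_gt eu ev sa sa' sg sg' sb sb'.
rewrite !all_distn_count_mem ?sa ?sb //.
have [/andP[_ i_lt] im_i _] := is_lsb_imbalance _ _ _ lsb_i.
have [/andP[_ j_lt] im_j _] := is_lsb_imbalance _ _ _ lsb_j.
have border_i : count_mem true (gamma ++ beta) = count_mem true (beta' ++ gamma').
  move: im_i; rewrite /imbalance su {1}eu drop_size_cat // ev catA take_size_cat.
    by lia.
  by rewrite size_cat; lia.
have border_j : count_mem true (gamma' ++ alpha') = count_mem true (alpha ++ gamma).
  move: im_j; rewrite /imbalance sv {1}ev drop_size_cat //.
  rewrite eu catA take_size_cat; first by lia.
  by rewrite size_cat; lia.
have overlap := lsb_overlap_one u v i j ltac:(lia) lsb_i lsb_j ltac:(lia).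
rewrite su eu ev !count_cat in overlap border_i border_j.
split; first by split; lia.
by rewrite -overlap; split; lia.
Qed.
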